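(* Let $n\ge 2$. (1) The set $\mathcal{O}_n(\mathbb{R})=\{O_M\mid M\in Mat^{tnz}_{2n}(\mathbb{R})\}$ of orientation sign matrices is in bijection with the set of right cosets of $K_n$ in $P_n$, and has cardinality $2^{n-1}(n-1)!$. (2) The set $\mathcal{S}^{tnz}_{2n}(\mathbb{R})$ of non-empty strata, which is in bijection with the orbit space $(\mathbb{Z}/2\mathbb{Z})\backslash\mathcal{O}_n(\mathbb{R})$, has cardinality $2^{n-2}(n-1)!$.
   Context: $Mat^{tnz}_{2n}(\mathbb{R})$ is the set of real $2\times n$ matrices all of whose $2\times2$ maximal minors are nonzero. For $M=(v_1,\dots,v_n)\in Mat^{tnz}_{2n}(\mathbb{R})$ the orientation sign matrix is $O_M=[\operatorname{sgn}\det(v_i,v_j)]_{1\le i,j\le n}$. The group $\mathbb{Z}/2\mathbb{Z}=\{\pm1\}$ acts on $\mathcal{O}_n(\mathbb{R})$ by $-1\bullet O_M=O_N$ with $N=(v_n,\dots,v_1)$ (so $O_N=-O_M=O_M^t$). $Gr^{tnz}_{2n}(\mathbb{R})=GL_2(\mathbb{R})\backslash Mat^{tnz}_{2n}(\mathbb{R})$; for $\mathcal{C}\subseteq\binom{[n]}{2}$ the stratum $\mathcal{S}^{tnz}_{\mathcal{C}}(\mathbb{R})$ consists of $GL_2(\mathbb{R})M$ such that the minor $\Delta_I(M)$ is positive exactly for $I\in\mathcal{C}$, or negative exactly for $I\in\mathcal{C}$; $\mathcal{S}^{tnz}_{2n}(\mathbb{R})$ is the set of non-empty strata. $P_n=\{(a_1,\dots,a_n)\in\{\pm1,\dots,\pm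 n\}^n\mid i\mapsto|a_i|\text{ is a permutation}\}$ is the signed permutation group, identified with the group of signed permutation matrices via $(a_1,\dots,a_n)\mapsto(\operatorname{sgn}(a_1)e_{|a_1|}^t,\dots,\operatorname{sgn}(a_n)e_{|a_n|}^t)$ (columns; $e_k$ standard basis vectors) with matrix multiplication; $|P_n|=2^nn!$. $K_n$ is the cyclic subgroup of order $2n$ generated by $(-n,1,2,\dots,n-1)\in P_n$. *)

From HB Require Import structures.
From mathcomp Require Import all_boot all_order all_algebra.
From mathcomp Require Import reals.
Set Implicit Arguments. Unset Strict Implicit. Unset Printing Implicit Defensive.
Import Order.TTheory GRing.Theory Num.Theory.
Local Open Scope ring_scope.

Definition minor2 (R : comNzRingType) (n : nat) (M : 'M[R]_(2, n)) (i j : 'I_n) : R :=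
  \det (\matrix_(r < 2, c < 2) M r (if c == ord0 then i else j)).

Definition tnz (R : comNzRingType) (n : nat) (M : 'M[R]_(2, n)) : Prop :=
  forall i j : 'I_n, (i < j)%N -> minor2 M i j != 0.

Definition orient (R : realDomainType) (n : nat) (M : 'M[R]_(2, n)) : 'M[int]_n :=
  \matrix_(i < n, j < n) sgz (minor2 M i j).

Definition isOrientMx (R : realDomainType) (n : nat) (O : 'M[int]_n) : Prop :=
  exists M : 'M[R]_(2, n), tnz M /\ orient M = O.

(* Signed permutations (a_1,...,a_n), a_i in {+-1,...,+-n}, i |-> |a_i| a permutation;
   indices are 0-based, values a_i are the paper's (1-based, signed) values. *)
Definition signed_perm (n : nat) (a : 'I_n -> int) : Prop :=
  (forall i, (0 < `|a i| <= n)%N) /\ injective (fun i => `|a i|%N).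

Definition spm (n : nat) (a : 'I_n -> int) : 'M[int]_n :=
  \matrix_(i < n, j < n) (if `|a j|%N == i.+1 then sgz (a j) else 0).

Definition isSignedPermMx (n : nat) (A : 'M[int]_n) : Prop :=
  exists a, signed_perm a /\ A = spm a.

Definition kgen (n : nat) : 'I_n -> int :=
  fun i => if val i == 0%N then - (n%:Z) else (val i)%:Z.

Definition mxpow (n : nat) (A : 'M[int]_n) (k : nat) : 'M[int]_n :=
  iter k (fun B : 'M[int]_n => A *m B) (1%:M : 'M[int]_n).

Definition inK (n : nat) (A : 'M[int]_n) : Prop :=
  exists k : nat, A = mxpow (spm (@kgen n)) k.

Definition same_right_coset (n : nat) (A B : 'M[int]_n) : Prop :=
  exists K, inK K /\ B = K *m A.

(* Stratum S_C, as a (GL_2-invariant) subset of Mat^{tnz}_{2n}(R),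
   i.e. the preimage of the stratum of Gr^{tnz}_{2n}(R).
   C is a subset of binom([n],2), encoded as pairs (i,j) with i<j. *)
Definition is_pairset (n : nat) (C : {set 'I_n * 'I_n}) : Prop :=
  forall p, p \in C -> (p.1 < p.2)%N.

Definition stratum (R : realDomainType) (n : nat) (C : {set 'I_n * 'I_n})
    (M : 'M[R]_(2, n)) : Prop :=
  tnz M /\
  ((forall i j : 'I_n, (i < j)%N -> (0 < minor2 M i j <-> (i, j) \in C)) \/
   (forall i j : 'I_n, (i < j)%N -> (minor2 M i j < 0 <-> (i, j) \in C))).

Definition same_stratum (R : realDomainType) (n : nat) (C D : {set 'I_n * 'I_n}) : Prop :=
  forall M : 'M[R]_(2, n), stratum C M <-> stratum D M.

Definition nonempty_stratum (R : realDomainType) (n : nat) (C : {set 'I_n * 'I_n}) : Prop :=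
  is_pairset C /\ exists M : 'M[R]_(2, n), stratum C M.

(* Z/2 action: (-1) . O = -O (= O^t); two elements of O_n lie in the same orbit. *)
Definition same_Z2_orbit (n : nat) (O O' : 'M[int]_n) : Prop :=
  O' = O \/ O' = - O.

(* For a signed permutation a of 1..n write O(a) for the sign matrix
     O(a)_ij = sgn(a_i) sgn(a_j) sgn(|a_j| - |a_i|).
   The proof rests on four facts about O:
   - Realisation: O(a) is the orientation matrix of line_config * P_a, where
     line_config has columns (1, k) and P_a is the signed permutation matrix.
   - Normal form: if M is totally nonzero, pick a combination l of the two rows
     vanishing on no column; the minors are Delta_ij = l_i l_j (y_j - y_i) with
     y_i = M_1i / l_i pairwise distinct, so orient M = O(a) where sgn a_i = sgn l_i
     and |a_i| is the rank of y_i.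
   - Cosets: left multiplication by the generator of K_n acts on signed
     permutations by a |-> kshift o a (1 |-> -n, -1 |-> n, +-p |-> +-(p-1)); it
     preserves O, some power of it sends any chosen entry to 1, and a signed
     permutation with a_0 = 1 is determined by O(a).  Hence O(a) = O(b) iff
     P_b lies in K_n P_a.
   - Counting: signed permutations with a_0 = 1 are coded by a permutation of
     the remaining n - 1 values and n - 1 signs, giving 2^(n-1) (n-1)!
     orientation matrices.  A stratum is the set of M with orient M = +-Sigma(C)
     for the sign pattern Sigma(C) of C, and each orbit {O, -O} contains exactly
     one O(a) with a_0 = 1 and a_1 > 0, giving 2^(n-2) (n-1)! strata. *)

From HB Require Import structures.
From mathcomp Require Import all_boot all_order all_algebra all_fingroup.
From mathcomp Require Import reals.
From mathcomp Require Import ring lra zify.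
Set Implicit Arguments. Unset Strict Implicit. Unset Printing Implicit Defensive.
Import Order.TTheory GRing.Theory Num.Theory.
Local Open Scope ring_scope.

Lemma minor2E (R : comNzRingType) n (M : 'M[R]_(2, n)) i j :
  minor2 M i j = M 0 i * M 1 j - M 1 i * M 0 j.
Proof.
rewrite /minor2 (expand_det_row _ ord0) !big_ord_recl big_ord0 /cofactor.
rewrite !det_mx11 !mxE /= expr0 expr1 !mul1r addr0 mulN1r mulrN.
have -> : lift ord0 (0 : 'I_1) = 1 by apply/val_inj.
have -> : (ord0 : 'I_2) = 0 by apply/val_inj.
by rewrite [M 1 i * _]mulrC.
Qed.

Lemma minor2_anti (R : comNzRingType) n (M : 'M[R]_(2, n)) i j :
  minor2 M j i = - minor2 M i j.
Proof. by rewrite !minor2E; ring. Qed.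

Lemma minor2_diag (R : comNzRingType) n (M : 'M[R]_(2, n)) i : minor2 M i i = 0.
Proof. by rewrite minor2E; ring. Qed.

Lemma tnz_minor_neq0 (R : realFieldType) n (M : 'M[R]_(2, n)) : tnz M ->
  forall i j, i != j -> minor2 M i j != 0.
Proof.
move=> h i j; rewrite neq_ltn => /orP [] ij; first exact: h.
by rewrite minor2_anti oppr_eq0; apply: h.
Qed.

Lemma sgz_subn (x y : nat) :
  sgz (x%:Z - y%:Z) = if (y < x)%N then 1 else if x == y then 0 else -1.
Proof.
case: (ltngtP x y) => h.
- by rewrite ltr0_sgz ?subr_lt0 ?ltz_nat.
- by rewrite gtr0_sgz ?subr_gt0 ?ltz_nat.
- by rewrite h subrr.
Qed.

Lemma ltn_sgz (x y : nat) : (x < y)%N = (sgz (y%:Z - x%:Z) == 1).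
Proof. by rewrite sgz_subn; case: (ltngtP x y). Qed.

Lemma sgz_pos_iff (R : realDomainType) (x : R) : x != 0 -> (0 < x <-> sgz x = 1).
Proof. by move=> nz; split=> [/gtr0_sgz | h] //; rewrite -sgz_gt0 h. Qed.

Lemma sgz_pm1 (R : realDomainType) (x : R) : x != 0 -> sgz x = 1 \/ sgz x = -1.
Proof. rewrite -sgz_eq0; case: sgzP => // _ _; by [right | left]. Qed.

Definition sp_orient n (a : 'I_n -> int) : 'M[int]_n :=
  \matrix_(i, j) (sgz (a i) * sgz (a j) * sgz ((absz (a j))%:Z - (absz (a i))%:Z)).

Lemma sp_orient_ext n (a b : 'I_n -> int) : a =1 b -> sp_orient a = sp_orient b.
Proof. by move=> e; apply/matrixP => i j; rewrite !mxE !e. Qed.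

Lemma signed_perm_neq0 n (a : 'I_n -> int) i : signed_perm a -> a i != 0.
Proof. by case=> h _; rewrite -absz_eq0; have := h i; lia. Qed.

Lemma sp_orient_anti n (a : 'I_n -> int) i j : sp_orient a j i = - sp_orient a i j.
Proof. by rewrite !mxE -opprB sgzN; ring. Qed.

Lemma sp_orient_pm1 n (a : 'I_n -> int) i j : signed_perm a -> i != j ->
  sp_orient a i j = 1 \/ sp_orient a i j = -1.
Proof.
move=> sa ne; rewrite mxE.
have dij : (absz (a j))%:Z - (absz (a i))%:Z != 0.
  by rewrite subr_eq0; apply: contra ne => /eqP [] /sa.2 ->.
case: (sgz_pm1 (signed_perm_neq0 i sa)) => ->;
  case: (sgz_pm1 (signed_perm_neq0 j sa)) => ->;
  case: (sgz_pm1 dij) => ->; by [left | right].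
Qed.

(* If the values q i are distinct and lie in 1..n, exactly q j - 1 of them are
   below q j: the absolute values of a signed permutation are recovered from
   their relative order. *)
Lemma card_ltn_ord n (m : nat) : (m <= n)%N -> #|[set k : 'I_n | (k < m)%N]| = m.
Proof.
move=> mn; have -> : [set k : 'I_n | (k < m)%N] = [set widen_ord mn k | k in 'I_m].
  apply/setP => k; rewrite inE; apply/idP/imsetP.
    by move=> km; exists (Ordinal km) => //; apply/val_inj.
  by case=> k' _ ->; rewrite /= ltn_ord.
by rewrite card_imset ?card_ord // => x y /(congr1 val) /= xy; apply/val_inj.
Qed.

Lemma card_below_value n (q : 'I_n -> nat) : injective q -> (forall i, 0 < q i <= n)%N ->
  forall j, #|[set i | (q i < q j)%N]| = (q j).-1.
Proof.
case: n q => [|n] q qi qb j; first by case: j.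
have rv i : nat_of_ord (inord (q i).-1 : 'I_n.+1) = (q i).-1.
  by rewrite inordK //; have := qb i; lia.
pose r i : 'I_n.+1 := inord (q i).-1.
have ri : injective r.
  move=> x y /(congr1 val); rewrite /r /= !rv => h; apply: qi.
  by have := qb x; have := qb y; lia.
have -> : [set i | (q i < q j)%N] = r @^-1: [set k : 'I_n.+1 | (k < r j)%N].
  by apply/setP => i; rewrite !inE /r !rv; have := qb i; have := qb j; lia.
by rewrite card_preimset // card_ltn_ord /r rv //; have := qb j; lia.
Qed.

(* O(a) determines a once the value 1 is fixed at some position i0: the
   product row i0 gives all signs, and then O(a) gives the relative order of
   the absolute values. *)
Lemma sp_orient_inj n (a b : 'I_n -> int) i0 : signed_perm a -> signed_perm b ->
  sp_orient a = sp_orient b -> a i0 = 1 -> b i0 = 1 -> a =1 b.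
Proof.
move=> sa sb Oab a1 b1.
have gt1 (c : 'I_n -> int) j : signed_perm c -> c i0 = 1 -> j != i0 ->
    (1 < absz (c j))%N.
  case=> cb ci c1 ne; have := cb j; have : absz (c j) != absz (c i0).
    by apply/eqP => /ci /eqP; rewrite (negbTE ne).
  by rewrite c1 /=; lia.
have sgab j : sgz (a j) = sgz (b j).
  have [->|ne] := eqVneq j i0; first by rewrite a1 b1.
  have := congr1 (fun O : 'M[int]_n => O i0 j) Oab.
  by rewrite /= !mxE a1 b1 !sgz1 !mul1r !sgz_subn /= (gt1 a) // (gt1 b) // !mulr1.
have ordab i j : sgz ((absz (a j))%:Z - (absz (a i))%:Z)
               = sgz ((absz (b j))%:Z - (absz (b i))%:Z).
  have := congr1 (fun O : 'M[int]_n => O i j) Oab; rewrite /= !mxE !sgab.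
  apply: mulfI; rewrite mulf_eq0 !sgz_eq0 negb_or !(signed_perm_neq0 _ sb).
  by [].
have same_below j : #|[set i | (absz (a i) < absz (a j))%N]|
                 = #|[set i | (absz (b i) < absz (b j))%N]|.
  apply: eq_card => i; rewrite !inE.
  by rewrite !ltn_sgz ordab.
move=> j; have absab : absz (a j) = absz (b j).
  have := same_below j.
  rewrite (card_below_value sa.2 sa.1) (card_below_value sb.2 sb.1).
  by have := sa.1 j; have := sb.1 j; lia.
by rewrite [a j]intEsg [b j]intEsg sgab absab.
Qed.

Lemma mulmx_spm (R : pzRingType) m n (B : 'M[R]_(m, n)) (a : 'I_n -> int) i j
    (k : 'I_n) : absz (a j) = k.+1 ->
  (B *m map_mx intr (spm a)) i j = B i k * (sgz (a j))%:~R.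
Proof.
move=> hk; rewrite !mxE (bigD1 k) //= big1 ?addr0; first by rewrite !mxE hk eqxx.
move=> k' nk; rewrite !mxE hk; case: eqP => [[e]|_]; last by rewrite mulr0.
by move: nk; rewrite (_ : k' = k) ?eqxx //; apply/val_inj.
Qed.

Lemma map_mx_intz n (A : 'M[int]_n) : map_mx intr A = A.
Proof. by apply/matrixP => i j; rewrite mxE intz. Qed.

Lemma spm_ext n (a b : 'I_n -> int) : a =1 b -> spm a = spm b.
Proof. by move=> e; apply/matrixP => i j; rewrite !mxE e. Qed.

Lemma spm_inj n (b c : 'I_n -> int) : signed_perm b -> signed_perm c ->
  spm b = spm c -> b =1 c.
Proof.
move=> [bb _] [cb _] e j.
have kl : ((absz (b j)).-1 < n)%N by have := bb j; lia.
have := congr1 (fun A : 'M[int]_n => A (Ordinal kl) j) e; rewrite !mxE /=.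
have -> : absz (b j) == (absz (b j)).-1.+1 by have := bb j; lia.
case: eqP => [ec|_]; last first.
  by move/eqP; rewrite sgz_eq0 -absz_eq0 => /eqP; have := bb j; lia.
move=> es; rewrite [b j]intEsg [c j]intEsg es ec.
by congr (_ * Posz _); have := bb j; lia.
Qed.

(* The effect of the generator (-n, 1, ..., n-1) of K_n on one signed value. *)
Definition kshift n (z : int) : int :=
  if z == 1 then - n%:Z else if z == -1 then n%:Z else if 0 < z then z - 1 else z + 1.

Lemma spm_kgen_mul n (a : 'I_n -> int) : signed_perm a ->
  spm (@kgen n) *m spm a = spm (fun j => kshift n (a j)).
Proof.
move=> [ab ai]; apply/matrixP => i j.
have hj := ab j; have kl : ((absz (a j)).-1 < n)%N by lia.
rewrite -[spm a]map_mx_intz (mulmx_spm _ _ (k := Ordinal kl)) /=; last by lia.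
rewrite !mxE /kgen /kshift /=.
move: hj; case: (a j) => [p|p] /= hp.
  case: p hp => [|[|q]] hp //=; first by rewrite intz mulr1.
  have -> : q.+2%:Z - 1 = q.+1 by rewrite -addn1 PoszD addrK.
  by rewrite intz mulr1.
case: p hp => [|q] hp /=.
  rewrite (_ : sgz (-1 : int) = -1) // intz mulrN1 abszN.
  by case: eqP => // _; rewrite sgzN opprK.
have -> : sgz (Negz q.+1) = -1 by [].
have -> : Negz q.+1 + 1 = Negz q by rewrite !NegzE; lia.
have -> : sgz (Negz q) = -1 by [].
by rewrite intz mulrN1 subn1 /=; case: eqP => //; rewrite oppr0.
Qed.

Lemma kshift_pos n (p : nat) : (1 < p)%N -> kshift n p = (p.-1)%:Z.
Proof. by case: p => [|[|p]] //= _; rewrite /kshift /= -addn1 PoszD addrK. Qed.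

Lemma kshift_neg n (p : nat) : (1 < p)%N -> kshift n (- p%:Z) = - (p.-1)%:Z.
Proof. by case: p => [|[|p]] //= _; rewrite /kshift /=; lia. Qed.

Lemma kshift_abs_sgz n (z : int) : (0 < absz z)%N ->
  absz (kshift n z) = (if absz z == 1%N then n else (absz z).-1) /\
  sgz (kshift n z) =
    (if absz z == 1%N then (if (0 < n)%N then - sgz z else 0) else sgz z).
Proof.
case: z => [p|p] /= hp.
  by case: p hp => [|[|p]] //= _; rewrite abszN; split=> //; case: n.
rewrite NegzE; case: p hp => [|p] _ /=; first by split=> //; case: n.
by rewrite kshift_neg // subn1 !sgzN.
Qed.

Lemma signed_perm_kshift n (a : 'I_n -> int) : signed_perm a ->
  signed_perm (fun j => kshift n (a j)).
Proof.
move=> [ab ai]; split.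
  move=> i; have /andP [hi _] := ab i; have [-> _] := kshift_abs_sgz n hi.
  by case: ifP; have := ab i; lia.
move=> i j /=; have /andP [hi _] := ab i; have /andP [hj _] := ab j.
have [-> _] := kshift_abs_sgz n hi; have [-> _] := kshift_abs_sgz n hj => e.
by apply: ai => /=; move: e; have := ab i; have := ab j; do 2 case: ifP; lia.
Qed.

Lemma sp_orient_kshift n (a : 'I_n -> int) : signed_perm a ->
  sp_orient (fun j => kshift n (a j)) = sp_orient a.
Proof.
move=> [ab ai]; apply/matrixP => i j; rewrite !mxE.
have hi := ab i; have hj := ab j.
have [-> ->] := kshift_abs_sgz n (proj1 (andP hi)).
have [-> ->] := kshift_abs_sgz n (proj1 (andP hj)).
have -> : (0 < n)%N by lia.
rewrite !sgz_subn; move: hi hj; set pi := absz (a i); set pj := absz (a j) => hi hj.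
case: (eqVneq pi 1%N) => ei; case: (eqVneq pj 1%N) => ej; rewrite ?ei ?ej ?eqxx /=.
all: do !case: ifP => ?; try (exfalso; lia); ring.
Qed.

Definition kiter n m (a : 'I_n -> int) : 'I_n -> int := fun j => iter m (kshift n) (a j).

Lemma kiterD n m1 m2 (a : 'I_n -> int) : kiter (m1 + m2) a =1 kiter m1 (kiter m2 a).
Proof. by move=> j; rewrite /kiter iterD. Qed.

Lemma signed_perm_kiter n m (a : 'I_n -> int) : signed_perm a -> signed_perm (kiter m a).
Proof. by move=> sa; elim: m => //= m IH; exact: (signed_perm_kshift IH). Qed.

Lemma sp_orient_kiter n m (a : 'I_n -> int) : signed_perm a ->
  sp_orient (kiter m a) = sp_orient a.
Proof.
move=> sa; elim: m => //= m IH.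
by rewrite -IH -(sp_orient_kshift (signed_perm_kiter m sa)).
Qed.

Lemma mxpow_kgen_mul n m (a : 'I_n -> int) : signed_perm a ->
  mxpow (spm (@kgen n)) m *m spm a = spm (kiter m a).
Proof.
move=> sa; elim: m => [|m IH]; first by rewrite /mxpow /= mul1mx.
rewrite /mxpow iterS -/(mxpow _ m) -mulmxA IH spm_kgen_mul //.
exact: signed_perm_kiter.
Qed.

Lemma kshift_iter_pos n k (p : nat) : (k < p)%N -> iter k (kshift n) p = (p - k)%N%:Z.
Proof.
elim: k => [|k IH] h /=; first by rewrite subn0.
by rewrite IH ?kshift_pos; [congr Posz | |]; lia.
Qed.

Lemma kshift_iter_neg n k (p : nat) : (k < p)%N ->
  iter k (kshift n) (- p%:Z) = - (p - k)%N%:Z.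
Proof.
elim: k => [|k IH] h /=; first by rewrite subn0.
by rewrite IH ?kshift_neg; [congr (- Posz _) | |]; lia.
Qed.

Lemma kiter_reach1 n (a : 'I_n -> int) i0 : signed_perm a -> exists m, kiter m a i0 = 1.
Proof.
move=> [ab _]; have := ab i0; rewrite /kiter.
case: (a i0) => [p|p] /= hp.
  by exists p.-1; rewrite kshift_iter_pos; [congr Posz|]; lia.
rewrite NegzE; exists (n.-1 + 1 + p)%N.
rewrite !iterD kshift_iter_neg // subSnn /= kshift_iter_pos; last by lia.
by congr Posz; lia.
Qed.

Lemma kshift_iter_n n (z : int) : (0 < absz z <= n)%N -> iter n (kshift n) z = - z.
Proof.
case: z => [p|p] /= hp.
  have -> : n = ((n - p) + 1 + p.-1)%N by lia.
  rewrite !iterD kshift_iter_pos; last by lia.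
  rewrite (_ : (p - p.-1)%N = 1%N) /=; last by lia.
  by rewrite kshift_iter_neg; [congr (- Posz _)|]; lia.
rewrite NegzE; have -> : n = ((n - p.+1) + 1 + p)%N by lia.
rewrite !iterD kshift_iter_neg; last by lia.
rewrite (_ : (p.+1 - p)%N = 1%N) /=; last by lia.
by rewrite kshift_iter_pos ?opprK; [congr Posz|]; lia.
Qed.

Lemma kshift_iter_2n n (z : int) : (0 < absz z <= n)%N -> iter (n + n) (kshift n) z = z.
Proof. by move=> h; rewrite iterD !kshift_iter_n ?opprK // abszN. Qed.

Lemma kiter_period n c (a : 'I_n -> int) : signed_perm a -> kiter ((n + n) * c) a =1 a.
Proof.
move=> [ab _]; elim: c => [|c IH] j; first by rewrite muln0.
rewrite mulnS kiterD /kiter kshift_iter_2n; first exact: IH.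
by rewrite -/(kiter _ _ j) IH; exact: ab.
Qed.

Lemma sp_orient_coset n (a b : 'I_n -> int) : (0 < n)%N ->
  signed_perm a -> signed_perm b ->
  (sp_orient a = sp_orient b <-> same_right_coset (spm a) (spm b)).
Proof.
move=> n0 sa sb; split=> [Oab | [K [[m ->]]]]; last first.
  rewrite mxpow_kgen_mul // => e.
  by rewrite (sp_orient_ext (spm_inj sb (signed_perm_kiter m sa) e)) sp_orient_kiter.
pose i0 : 'I_n := Ordinal n0.
have [mb hb] := kiter_reach1 i0 sb; have [ma ha] := kiter_reach1 i0 sa.
have normal_eq : kiter ma a =1 kiter mb b.
  apply: (sp_orient_inj (signed_perm_kiter ma sa) (signed_perm_kiter mb sb) _ ha hb).
  by rewrite !sp_orient_kiter.
have mb_le : (mb <= (n + n) * mb)%N by apply: leq_pmull; lia.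
exists (mxpow (spm (@kgen n)) ((n + n) * mb - mb + ma)); split; first by eexists.
rewrite mxpow_kgen_mul //; apply: spm_ext => j.
rewrite kiterD /kiter -/(kiter ma a j) normal_eq -/(kiter _ _ j) -kiterD subnK //.
by rewrite kiter_period.
Qed.

(* The configuration of the points (1, 1), (1, 2), ..., (1, n); multiplying it
   by P_a realises O(a). *)
Definition line_config (R : realDomainType) n : 'M[R]_(2, n) :=
  \matrix_(r, c) (if r == 0 then 1 else (c.+1)%:R).

Definition realize (R : realDomainType) n (A : 'M[int]_n) : 'M[R]_(2, n) :=
  line_config R n *m map_mx intr A.

Lemma minor2_realize (R : realDomainType) n (a : 'I_n -> int) i j : signed_perm a ->
  minor2 (realize R (spm a)) i j =
  (sgz (a i) * sgz (a j) * ((absz (a j))%:Z - (absz (a i))%:Z))%:~R.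
Proof.
move=> [ab _].
have kl (k : 'I_n) : ((absz (a k)).-1 < n)%N by have := ab k; lia.
have kk (k : 'I_n) : absz (a k) = (Ordinal (kl k)).+1 by have := ab k => /= ?; lia.
rewrite minor2E !(mulmx_spm _ _ (kk i)) !(mulmx_spm _ _ (kk j)) !mxE /= -!kk.
by rewrite !rmorphM /= !rmorphB /=; ring.
Qed.

Lemma tnz_realize (R : realDomainType) n (a : 'I_n -> int) : signed_perm a ->
  tnz (realize R (spm a)).
Proof.
move=> sa i j ij; rewrite minor2_realize // intr_eq0 !mulf_eq0 !sgz_eq0.
rewrite !(negbTE (signed_perm_neq0 _ sa)) /= subr_eq0.
by apply/negP => /eqP [] /(sa.2) e; move: ij; rewrite e ltnn.
Qed.

Lemma orient_realize (R : realDomainType) n (a : 'I_n -> int) : signed_perm a ->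
  orient (realize R (spm a)) = sp_orient a.
Proof.
by move=> sa; apply/matrixP => i j; rewrite !mxE minor2_realize // sgz_int !sgzM !sgz_id.
Qed.

Lemma isOrientMx_sp_orient (R : realDomainType) n (a : 'I_n -> int) : signed_perm a ->
  isOrientMx R (sp_orient a).
Proof.
by move=> sa; exists (realize R (spm a)); split; [exact: tnz_realize | exact: orient_realize].
Qed.

Lemma tnz_column_neq0 (R : realFieldType) n (M : 'M[R]_(2, n)) : (1 < n)%N -> tnz M ->
  forall i, (M 0 i != 0) || (M 1 i != 0).
Proof.
case: n M => [|n] M n2 h i; first by case: i.
pose j : 'I_n.+1 := inord (if val i == 0%N then 1 else 0).
have ji : i != j.
  apply/eqP => /(congr1 val); rewrite /j /= inordK; last by case: (val i == 0%N); lia.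
  by case: eqP => // ->.
have := tnz_minor_neq0 h ji; rewrite minor2E; apply: contraR.
by rewrite negb_or !negbK => /andP [/eqP -> /eqP ->]; rewrite !mul0r subrr.
Qed.

(* If no column vanishes, some combination l = row 0 + t * row 1 vanishes on
   no column (take t larger than all ratios |M_0i / M_1i|). *)
Lemma exists_nonvanishing_row (R : realFieldType) n (M : 'M[R]_(2, n)) :
  (forall i, (M 0 i != 0) || (M 1 i != 0)) ->
  exists t : R, forall i, M 0 i + t * M 1 i != 0.
Proof.
move=> cz; pose t := 1 + \sum_k `|M 0 k / M 1 k|; exists t => i.
have [e|ne] := eqVneq (M 1 i) 0.
  by have := cz i; rewrite e eqxx orbF mulr0 addr0.
have le : `|M 0 i / M 1 i| <= \sum_k `|M 0 k / M 1 k|.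
  by rewrite (bigD1 i) //= lerDl; apply: sumr_ge0 => k _; exact: normr_ge0.
have pos : 0 < M 0 i / M 1 i + t.
  by have := ler_norm (- (M 0 i / M 1 i)); rewrite normrN /t; lra.
have -> : M 0 i + t * M 1 i = M 1 i * (M 0 i / M 1 i + t) by field.
by rewrite mulf_eq0 negb_or ne gt_eqF.
Qed.

Lemma tnz_affine_chart (R : realFieldType) n (M : 'M[R]_(2, n)) : (1 < n)%N -> tnz M ->
  exists l y : 'I_n -> R, [/\ forall i, l i != 0, injective y &
    forall i j, minor2 M i j = l i * l j * (y j - y i)].
Proof.
move=> n2 h; have [t ht] := exists_nonvanishing_row (tnz_column_neq0 n2 h).
pose l i := M 0 i + t * M 1 i; pose y i := M 1 i / l i.
have key i j : minor2 M i j = l i * l j * (y j - y i).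
  by rewrite minor2E /y /l; field; rewrite !ht.
exists l, y; split=> // i j e; apply/eqP; apply: contraT => ne.
by have := tnz_minor_neq0 h ne; rewrite key e subrr mulr0 eqxx.
Qed.

Section Rank.
Variables (R : realDomainType) (n : nat) (y : 'I_n -> R).
Hypothesis y_inj : injective y.

Definition rank (i : 'I_n) : nat := #|[set k | y k < y i]|.

Lemma rank_mono i j : y i < y j -> (rank i < rank j)%N.
Proof.
move=> lt; apply: proper_card; apply/properP; split.
  by apply/subsetP => k; rewrite !inE => /lt_trans; apply.
by exists i; rewrite !inE ?lt // ltxx.
Qed.

Lemma rank_lt i : (rank i < n)%N.
Proof.
rewrite -[n]card_ord -cardsT; apply: proper_card; apply/properP.
by split; [apply: subsetT | exists i; rewrite !inE ?ltxx].
Qed.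

Lemma rank_inj : injective rank.
Proof. by move=> i j e; apply: y_inj; case: (ltgtP (y i) (y j)) => // /rank_mono; rewrite e ltnn. Qed.

Lemma sgz_rank i j : sgz (y j - y i) = sgz ((rank j)%:Z - (rank i)%:Z).
Proof.
rewrite sgz_subn; case: (ltgtP (y i) (y j)) => c.
- by rewrite (rank_mono c) gtr0_sgz // subr_gt0.
- have c' := rank_mono c.
  by rewrite ltr0_sgz ?subr_lt0 // ltnNge (ltnW c') (ltn_eqF c').
- by rewrite (y_inj c) ltnn eqxx subrr sgz0.
Qed.

End Rank.

(* Normal form: every orientation matrix with n >= 2 is O(a) for a signed
   permutation a, with sgn a_i = sgn l_i and |a_i| = 1 + rank of y_i. *)
Lemma orient_sp_orient (R : realFieldType) n (M : 'M[R]_(2, n)) : (1 < n)%N -> tnz M ->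
  exists a : 'I_n -> int, signed_perm a /\ orient M = sp_orient a.
Proof.
move=> n2 h; have [l [y [lnz y_inj key]]] := tnz_affine_chart n2 h.
pose a i := sgz (l i) * (rank y i).+1%:Z.
have abs_a i : absz (a i) = (rank y i).+1.
  by rewrite /a abszM; case: (sgz_pm1 (lnz i)) => ->; rewrite mul1n.
have sgz_a i : sgz (a i) = sgz (l i).
  by rewrite /a sgzM sgz_id [sgz (Posz _)]gtr0_sgz ?mulr1.
exists a; split.
  split=> [i | i j /= e]; first by rewrite abs_a; have := rank_lt y i; lia.
  by apply: (rank_inj y_inj); move: e; rewrite !abs_a => -[].
apply/matrixP => i j; rewrite !mxE !sgz_a !abs_a key !sgzM (sgz_rank y_inj).
by rewrite !sgz_subn ltnS eqSS.
Qed.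

(* Codes of the signed permutations of 1..n'+2 taking the value 1 at 0: a
   permutation of the positions 1..n'+1 of the values 2..n'+2, and their signs. *)
Definition code (n' : nat) := ({perm 'I_n'.+1} * {ffun 'I_n'.+1 -> bool})%type.

Definition bsign (b : bool) : int := if b then -1 else 1.

Definition code_sp n' (x : code n') : 'I_n'.+2 -> int := fun i =>
  if (i : nat) == 0%N then 1 else bsign (x.2 (inord i.-1)) * (x.1 (inord i.-1) : nat).+2%:Z.

Lemma abszM_bsign b (p : nat) : absz (bsign b * p%:Z) = p.
Proof. by case: b; rewrite /bsign ?mulN1r ?mul1r ?abszN. Qed.

Lemma sgzM_bsign b (p : nat) : sgz (bsign b * p.+1%:Z) = bsign b.
Proof. by case: b; rewrite /bsign ?mulN1r ?mul1r ?sgzN. Qed.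

Lemma inord_succK n' (k : 'I_n'.+1) : (inord k.+1 : 'I_n'.+2) = k.+1 :> nat.
Proof. by rewrite inordK //; have := ltn_ord k; lia. Qed.

Lemma absz_code_sp n' (x : code n') (i : 'I_n'.+2) :
  absz (code_sp x i) = if (i : nat) == 0%N then 1%N else (x.1 (inord i.-1) : nat).+2.
Proof. by rewrite /code_sp; case: eqP => // _; rewrite abszM_bsign. Qed.

Lemma signed_perm_code_sp n' (x : code n') : signed_perm (code_sp x).
Proof.
split=> [i | i j /=]; rewrite ?absz_code_sp.
  by case: eqP => // _; have := ltn_ord (x.1 (inord i.-1)); lia.
case: eqP => ei; case: eqP => ej // e.
- by apply/val_inj; rewrite /= ei ej.
have hi : (i.-1 <= n')%N by have := ltn_ord i; lia.
have hj : (j.-1 <= n')%N by have := ltn_ord j; lia.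
move: e => [] /val_inj /perm_inj /(congr1 val); rewrite /= !inordK // => e.
by apply/val_inj; move: ei ej e; case: i {hi} => i ? /=; case: j {hj} => j ? /=; lia.
Qed.

Lemma code_sp0 n' (x : code n') : code_sp x ord0 = 1. Proof. by []. Qed.

Lemma code_sp_inj n' (x y : code n') : code_sp x =1 code_sp y -> x = y.
Proof.
move=> e.
have h k : x.1 k = y.1 k /\ x.2 k = y.2 k.
  have := e (inord k.+1); rewrite /code_sp inord_succK /=.
  have -> : (inord k : 'I_n'.+1) = k by apply/val_inj; rewrite /= inordK.
  case: (x.2 k); case: (y.2 k); rewrite /bsign /= ?mulN1r ?mul1r => h; split => //;
    try (apply/val_inj; rewrite /=); lia.
case: x y e h => [s1 f1] [s2 f2] e h /=; congr pair.
  by apply/permP => k; have [] := h k.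
by apply/ffunP => k; have [] := h k.
Qed.

Lemma code_sp_surj n' (a : 'I_n'.+2 -> int) : signed_perm a -> a ord0 = 1 ->
  exists x, code_sp x =1 a.
Proof.
move=> [ab ai] a0.
have ge2 (i : 'I_n'.+2) : (i : nat) != 0%N -> (2 <= absz (a i) <= n'.+2)%N.
  move=> ne; have := ab i; have : absz (a i) != absz (a ord0).
    by apply/eqP => /ai e; move: ne; rewrite e.
  by rewrite a0 /=; lia.
have gk (k : 'I_n'.+1) : (2 <= absz (a (inord k.+1)) <= n'.+2)%N.
  by apply: ge2; rewrite inord_succK.
pose f (k : 'I_n'.+1) : 'I_n'.+1 := inord (absz (a (inord k.+1)) - 2).
have fv k : nat_of_ord (f k) = (absz (a (inord k.+1)) - 2)%N.
  by rewrite /f inordK //; have := gk k; lia.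
have finj : injective f.
  move=> k1 k2 /(congr1 val) /=; rewrite -[val (f k1)]/(nat_of_ord (f k1)).
  rewrite -[val (f k2)]/(nat_of_ord (f k2)) !fv => e.
  have : absz (a (inord k1.+1)) = absz (a (inord k2.+1)) by have := gk k1; have := gk k2; lia.
  by move/ai/(congr1 (@nat_of_ord _)); rewrite !inord_succK => -[] /val_inj.
exists (perm finj, [ffun k : 'I_n'.+1 => (a (inord k.+1) < 0)]) => i.
rewrite /code_sp /=; case: eqP => [e|ne]; first by rewrite -a0; congr a; apply/val_inj.
have ei : (inord (inord i.-1 : 'I_n'.+1).+1 : 'I_n'.+2) = i.
  by apply/val_inj; rewrite /= !inordK //; move: ne; case: i => [i hi] /= ?; lia.
rewrite permE ffunE -[val (f _)]/(nat_of_ord (f _)) fv ei.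
have := ge2 i (introN eqP ne) => h.
have -> : ((absz (a i) - 2).+2 = absz (a i))%N by lia.
rewrite [in RHS](intEsg (a i)); congr (_ * _).
by rewrite /bsign; case: (intP (a i)) h.
Qed.

Lemma sp_orient_code_inj n' (x y : code n') :
  sp_orient (code_sp x) = sp_orient (code_sp y) -> x = y.
Proof.
move=> e; apply: code_sp_inj.
exact: sp_orient_inj (signed_perm_code_sp x) (signed_perm_code_sp y) e
  (code_sp0 x) (code_sp0 y).
Qed.

Lemma sp_orient_code01 n' (x : code n') :
  sp_orient (code_sp x) ord0 (inord 1) = bsign (x.2 ord0).
Proof.
have i1 : nat_of_ord (inord 1 : 'I_n'.+2) = 1%N by rewrite inordK.
rewrite mxE code_sp0 sgz1 mul1r /code_sp i1 /=.
have -> : (inord 0 : 'I_n'.+1) = ord0 by apply/val_inj; rewrite /= inordK.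
by rewrite sgzM_bsign abszM_bsign gtr0_sgz ?mulr1 // subr_gt0 ltz_nat.
Qed.

Lemma orient_code (R : realFieldType) n' (O : 'M[int]_n'.+2) : isOrientMx R O ->
  exists x : code n', O = sp_orient (code_sp x).
Proof.
move=> [M [t <-]]; have [a [sa ->]] := orient_sp_orient (isT : (1 < n'.+2)%N) t.
have [m hm] := kiter_reach1 ord0 sa.
have [x hx] := code_sp_surj (signed_perm_kiter m sa) hm.
by exists x; rewrite (sp_orient_ext hx) sp_orient_kiter.
Qed.

Lemma card_code n' : #|{: code n'}| = (2 ^ n'.+1 * n'.+1`!)%N.
Proof. by rewrite card_prod card_Sn card_ffun card_bool card_ord mulnC. Qed.

(* Codes whose first sign is +, obtained from a permutation and n' signs. *)
Definition half_code (n' : nat) := ({perm 'I_n'.+1} * {ffun 'I_n' -> bool})%type.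

Definition half_embed n' (x : half_code n') : code n' :=
  (x.1, [ffun k : 'I_n'.+1 => if unlift ord0 k is Some k' then x.2 k' else false]).

Lemma half_embed_inj n' : injective (@half_embed n').
Proof.
move=> [s1 f1] [s2 f2] e; have /= e1 := congr1 fst e; congr pair => //.
apply/ffunP => k; have := congr1 (fun f : code n' => f.2 (lift ord0 k)) e.
by rewrite /= !ffunE liftK.
Qed.

Lemma half_embed_surj n' (y : code n') : y.2 ord0 = false -> exists x, half_embed x = y.
Proof.
move=> y0; exists (y.1, [ffun k : 'I_n' => y.2 (lift ord0 k)]).
case: y y0 => s f /= y0; congr pair; apply/ffunP => k; rewrite !ffunE.
by case: unliftP => [j ->|->]; rewrite ?ffunE.
Qed.

Lemma half_embed0 n' (x : half_code n') : (half_embed x).2 ord0 = false.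
Proof. by rewrite /half_embed /= ffunE unlift_none. Qed.

Lemma card_half_code n' : #|{: half_code n'}| = (2 ^ n' * n'.+1`!)%N.
Proof. by rewrite card_prod card_Sn card_ffun card_bool card_ord mulnC. Qed.

Definition sign_matrix n (O : 'M[int]_n) : Prop :=
  (forall i j, O j i = - O i j) /\ (forall i j, i != j -> O i j = 1 \/ O i j = -1).

Lemma sign_matrix_sp_orient n (a : 'I_n -> int) : signed_perm a -> sign_matrix (sp_orient a).
Proof. by move=> sa; split=> i j; [exact: sp_orient_anti | exact: sp_orient_pm1]. Qed.

Lemma sign_matrix_orient (R : realFieldType) n (M : 'M[R]_(2, n)) : tnz M ->
  sign_matrix (orient M).
Proof.
move=> t; split=> i j; rewrite !mxE; first by rewrite minor2_anti sgzN.
by move=> ne; apply: sgz_pm1; exact: tnz_minor_neq0.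
Qed.

Definition pair_signs n (C : {set 'I_n * 'I_n}) : 'M[int]_n :=
  \matrix_(i, j) (if (i < j)%N then (if (i, j) \in C then 1 else -1)
                  else if (j < i)%N then (if (j, i) \in C then -1 else 1) else 0).

Definition pairs_of n (O : 'M[int]_n) : {set 'I_n * 'I_n} :=
  [set p : 'I_n * 'I_n | (p.1 < p.2)%N && (O p.1 p.2 == 1)].

Lemma is_pairset_pairs_of n (O : 'M[int]_n) : is_pairset (pairs_of O).
Proof. by move=> p; rewrite inE => /andP []. Qed.

Lemma pair_signs_of n (O : 'M[int]_n) : sign_matrix O -> pair_signs (pairs_of O) = O.
Proof.
move=> [anti pm]; apply/matrixP => i j; rewrite [LHS]mxE !inE /=.
case: (ltngtP i j) => c.
- have : O i j = 1 \/ O i j = -1 by apply: pm; rewrite neq_ltn c.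
  by case=> ->.
- have : O j i = 1 \/ O j i = -1 by apply: pm; rewrite neq_ltn c.
  by rewrite (anti j i); case=> ->.
- have -> : i = j by apply/val_inj.
  by have := anti j j; lia.
Qed.

Lemma pair_signsC n (C : {set 'I_n * 'I_n}) : - pair_signs C = pair_signs (~: C).
Proof.
apply/matrixP => i j; rewrite !mxE !inE.
by case: (ltngtP i j) => _; [case: (_ \in C) | case: (_ \in C) | rewrite oppr0].
Qed.

Lemma orient_pair_signs (R : realDomainType) n (M : 'M[R]_(2, n)) C : tnz M ->
  (orient M = pair_signs C <->
   forall i j : 'I_n, (i < j)%N -> (0 < minor2 M i j <-> (i, j) \in C)).
Proof.
move=> t; split.
  move=> e i j ij; have := congr1 (fun A : 'M[int]_n => A i j) e; rewrite !mxE ij.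
  by rewrite (sgz_pos_iff (t i j ij)) => ->; case: (_ \in C).
move=> h; apply/matrixP => i j; rewrite !mxE.
case: (ltngtP i j) => c.
- have := h i j c; rewrite (sgz_pos_iff (t i j c)).
  case: (_ \in C) => -[h1 h2]; first exact: h2.
  by case: (sgz_pm1 (t i j c)) => e; rewrite e //; have := h1 e.
- rewrite minor2_anti sgzN; have := h j i c; rewrite (sgz_pos_iff (t j i c)).
  case: (_ \in C) => -[h1 h2]; first by rewrite h2.
  by case: (sgz_pm1 (t j i c)) => e; rewrite e //; have := h1 e.
- have -> : i = j by apply/val_inj.
  by rewrite minor2_diag sgz0.
Qed.

Lemma stratumE (R : realDomainType) n (C : {set 'I_n * 'I_n}) (M : 'M[R]_(2, n)) :
  stratum C M <-> tnz M /\ (orient M = pair_signs C \/ orient M = - pair_signs C).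
Proof.
rewrite pair_signsC; split=> -[t h]; split=> //.
  case: h => h; [left | right]; apply/(orient_pair_signs _ t) => i j ij.
    exact: h.
  rewrite inE; split=> [p | /negP nC].
    by apply/negP => /(h i j ij) n0; move: (lt_trans p n0); rewrite ltxx.
  have := t i j ij; rewrite neq_lt => /orP [] c //.
  by case: nC; apply/(h i j ij).
case: h => /(orient_pair_signs _ t) h; [left | right] => i j ij; first exact: h.
have := h i j ij; rewrite inE => -[h1 h2]; split.
  by move=> n0; apply/negPn/negP => /h2 p; move: (lt_trans p n0); rewrite ltxx.
move=> c; have := t i j ij; rewrite neq_lt => /orP [] // p.
by move: (h1 p); rewrite c.
Qed.

(* Negating the first row negates all minors, so O_n is closed under -1. *)
Definition flip_row (R : realDomainType) n (M : 'M[R]_(2, n)) : 'M[R]_(2, n) :=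
  \matrix_(r, c) (if r == 0 then - M r c else M r c).

Lemma minor2_flip_row (R : realDomainType) n (M : 'M[R]_(2, n)) i j :
  minor2 (flip_row M) i j = - minor2 M i j.
Proof. by rewrite !minor2E !mxE /=; ring. Qed.

Lemma isOrientMx_opp (R : realDomainType) n (O : 'M[int]_n) :
  isOrientMx R O -> isOrientMx R (- O).
Proof.
move=> [M [t <-]]; exists (flip_row M); split.
  by move=> i j ij; rewrite minor2_flip_row oppr_eq0; apply: t.
by apply/matrixP => i j; rewrite !mxE minor2_flip_row sgzN.
Qed.

Lemma isOrientMx_pair_signs (R : realDomainType) n (C : {set 'I_n * 'I_n}) :
  nonempty_stratum R C -> isOrientMx R (pair_signs C).
Proof.
move=> [_ [M /stratumE [t [e|e]]]]; first by exists M.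
by rewrite -[pair_signs C]opprK -e; apply: isOrientMx_opp; exists M.
Qed.

Lemma same_stratum_of_Z2 (R : realDomainType) n (C D : {set 'I_n * 'I_n}) :
  same_Z2_orbit (pair_signs C) (pair_signs D) -> same_stratum R C D.
Proof.
move=> e M; rewrite !stratumE.
by case: e => ->; rewrite ?opprK; split => -[t h]; split => //; case: h; tauto.
Qed.

Lemma same_stratum_Z2 (R : realDomainType) n (C D : {set 'I_n * 'I_n}) :
  nonempty_stratum R C -> nonempty_stratum R D ->
  (same_Z2_orbit (pair_signs C) (pair_signs D) <-> same_stratum R C D).
Proof.
move=> [_ [M hM]] _; split; first exact: same_stratum_of_Z2.
move=> CD; have := (CD M).1 hM; move: hM; rewrite !stratumE => -[_ hC] [_ hD].
have flip (E : {set 'I_n * 'I_n}) : orient M = pair_signs E \/ orient M = - pair_signs E ->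
    pair_signs E = orient M \/ pair_signs E = - orient M.
  by case=> ->; rewrite ?opprK; by [left | right].
rewrite /same_Z2_orbit; case: (flip _ hC) => ->; case: (flip _ hD) => ->.
all: by rewrite ?opprK; by [left | right].
Qed.

Lemma orientation_cosets (R : realType) n : (1 < n)%N ->
  exists phi : 'M[int]_n -> 'M[int]_n,
    (forall A, isSignedPermMx A -> isOrientMx R (phi A)) /\
    (forall O, isOrientMx R O -> exists A, isSignedPermMx A /\ phi A = O) /\
    (forall A B, isSignedPermMx A -> isSignedPermMx B ->
       (phi A = phi B <-> same_right_coset A B)).
Proof.
move=> n2; exists (fun A => orient (realize R A)); split; [|split].
- by move=> _ [a [sa ->]]; rewrite orient_realize //; exact: isOrientMx_sp_orient.
- move=> _ [M [t <-]]; have [a [sa e]] := orient_sp_orient n2 t.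
  by exists (spm a); split; [exists a | rewrite orient_realize // e].
- move=> _ _ [a [sa ->]] [b [sb ->]]; rewrite !orient_realize //.
  exact: sp_orient_coset (ltnW n2) sa sb.
Qed.

Lemma orientation_count (R : realType) n' :
  exists s : seq 'M[int]_n'.+2,
    uniq s /\ (forall O, O \in s <-> isOrientMx R O) /\
    size s = (2 ^ n'.+1 * n'.+1`!)%N.
Proof.
exists [seq sp_orient (code_sp x) | x <- enum {: code n'}]; split; [|split].
- by rewrite map_inj_uniq ?enum_uniq //; exact: sp_orient_code_inj.
- move=> O; split=> [/mapP [x _ ->] | /orient_code [x ->]].
    exact: isOrientMx_sp_orient (signed_perm_code_sp x).
  by apply/mapP; exists x; rewrite ?mem_enum.
- by rewrite size_map -cardE card_code.
Qed.

Lemma strata_orbits (R : realType) n :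
  exists psi : {set 'I_n * 'I_n} -> 'M[int]_n,
    (forall C, nonempty_stratum R C -> isOrientMx R (psi C)) /\
    (forall O, isOrientMx R O ->
       exists C, nonempty_stratum R C /\ same_Z2_orbit O (psi C)) /\
    (forall C D, nonempty_stratum R C -> nonempty_stratum R D ->
       (same_Z2_orbit (psi C) (psi D) <-> same_stratum R C D)).
Proof.
exists (@pair_signs n); split; [|split].
- exact: isOrientMx_pair_signs.
- move=> _ [M [t <-]]; have e := pair_signs_of (sign_matrix_orient t).
  exists (pairs_of (orient M)); split; last by left.
  split; first exact: is_pairset_pairs_of.
  by exists M; apply/stratumE; split=> //; left.
- exact: same_stratum_Z2.
Qed.

Lemma orbit_half_code (R : realType) n' (O : 'M[int]_n'.+2) : isOrientMx R O ->
  exists x : half_code n', same_Z2_orbit (sp_orient (code_sp (half_embed x))) O.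
Proof.
move=> hO; have [y ey] := orient_code hO; case y0 : (y.2 ord0); last first.
  by have [x ex] := half_embed_surj y0; exists x; left; rewrite ex.
have [z ez] := orient_code (isOrientMx_opp hO).
have z0 : z.2 ord0 = false.
  have := congr1 (fun A : 'M[int]_n'.+2 => A ord0 (inord 1)) ez.
  by rewrite /= mxE ey !sp_orient_code01 y0 /bsign; case: (z.2 ord0).
by have [x ex] := half_embed_surj z0; exists x; right; rewrite ex -ez opprK.
Qed.

(* Distinct half codes lie in distinct orbits: O_01 = 1 for all of them. *)
Lemma half_code_orbit_inj n' (x y : half_code n') :
  same_Z2_orbit (sp_orient (code_sp (half_embed x))) (sp_orient (code_sp (half_embed y))) ->
  x = y.
Proof.
case=> [e | e]; first by apply: half_embed_inj; apply: sp_orient_code_inj.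
have := congr1 (fun A : 'M[int]_n'.+2 => A ord0 (inord 1)) e.
by rewrite /= [in RHS]mxE !sp_orient_code01 !half_embed0.
Qed.

(* The stratum of the pattern of a half code contains line_config * P_a. *)
Lemma nonempty_stratum_half_code (R : realType) n' (x : half_code n') :
  nonempty_stratum R (pairs_of (sp_orient (code_sp (half_embed x)))).
Proof.
have sa := signed_perm_code_sp (half_embed x).
split; first exact: is_pairset_pairs_of.
exists (realize R (spm (code_sp (half_embed x)))); apply/stratumE.
split; first exact: tnz_realize.
by left; rewrite orient_realize // pair_signs_of //; exact: sign_matrix_sp_orient.
Qed.

Lemma strata_count (R : realType) n' :
  exists Cs : seq {set 'I_n'.+2 * 'I_n'.+2},
    uniq Cs /\
    (forall C, C \in Cs -> nonempty_stratum R C) /\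
    (forall C D, C \in Cs -> D \in Cs -> same_stratum R C D -> C = D) /\
    (forall C, nonempty_stratum R C -> exists2 D, D \in Cs & same_stratum R C D) /\
    size Cs = (2 ^ n' * n'.+1`!)%N.
Proof.
pose S (x : half_code n') := pairs_of (sp_orient (code_sp (half_embed x))).
have signs_S x : pair_signs (S x) = sp_orient (code_sp (half_embed x)).
  by apply: pair_signs_of; apply: sign_matrix_sp_orient; exact: signed_perm_code_sp.
exists [seq S x | x <- enum {: half_code n'}]; split; [|split; [|split; [|split]]].
- rewrite map_inj_uniq ?enum_uniq // => x y /(congr1 (@pair_signs _)).
  by rewrite !signs_S => e; apply: half_code_orbit_inj; left.
- by move=> _ /mapP [x _ ->]; exact: nonempty_stratum_half_code.
- move=> _ _ /mapP [x _ ->] /mapP [y _ ->] /same_stratum_Z2 xy.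
  move: xy; rewrite !signs_S => /(_ (nonempty_stratum_half_code R x)).
  by move/(_ (nonempty_stratum_half_code R y)) => /half_code_orbit_inj ->.
- move=> C hC; have [x ex] := orbit_half_code (isOrientMx_pair_signs hC).
  exists (S x); first by apply/mapP; exists x; rewrite ?mem_enum.
  apply: same_stratum_of_Z2; rewrite signs_S.
  by case: ex => ->; [left | right; rewrite opprK].
- by rewrite size_map -cardE card_half_code.
Qed.

Unset Implicit Arguments.

Theorem mainTheorem5 (R : realType) (n : nat) (hn : (2 <= n)%N) :
  (exists phi : 'M[int]_n -> 'M[int]_n,
      (forall A, isSignedPermMx A -> isOrientMx R (phi A)) /\
      (forall O, isOrientMx R O -> exists A, isSignedPermMx A /\ phi A = O) /\
      (forall A B, isSignedPermMx A -> isSignedPermMx B ->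
         (phi A = phi B <-> same_right_coset A B))) /\
  (exists s : seq 'M[int]_n,
      uniq s /\ (forall O, O \in s <-> isOrientMx R O) /\
      size s = (2 ^ n.-1 * n.-1`!)%N) /\
  (exists psi : {set 'I_n * 'I_n} -> 'M[int]_n,
      (forall C, nonempty_stratum R C -> isOrientMx R (psi C)) /\
      (forall O, isOrientMx R O ->
         exists C, nonempty_stratum R C /\ same_Z2_orbit O (psi C)) /\
      (forall C D, nonempty_stratum R C -> nonempty_stratum R D ->
         (same_Z2_orbit (psi C) (psi D) <-> same_stratum R C D))) /\
  (exists Cs : seq {set 'I_n * 'I_n},
      uniq Cs /\
      (forall C, C \in Cs -> nonempty_stratum R C) /\
      (forall C D, C \in Cs -> D \in Cs -> same_stratum R C D -> C = D) /\
      (forall C, nonempty_stratum R C -> exists2 D, D \in Cs & same_stratum R C D) /\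
      size Cs = (2 ^ (n - 2) * n.-1`!)%N).
Proof.
case: n hn => [|[|n']] // hn.
split; first exact: orientation_cosets.
split; first exact: orientation_count.
split; first exact: strata_orbits.
by rewrite subSS subSS subn0; exact: strata_count.
Qed.
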